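(* Suppose $\nu_1$ and $\nu_2$ are special isomorphisms on $\mathcal{H}$. Then the following are equivalent: (1) $\nu_1=\nu_2$; (2) $\nu_1^{-1}(W\times 1) = \nu_2^{-1}(W\times 1)$; (3) there exists $s\in \mathcal{S}$ such that $\nu_2= s\circ \nu_1$.
   Context: Let $p$ be an odd prime. Let $\mathcal{H}$ be a Heisenberg $p$-group, i.e. a group isomorphic to $W_0\boxtimes C$ for some nondegenerate finite symplectic space $W_0$ over $\mathbb{F}_p$ and cyclic group $C$ of order $p$ (the set $W_0\times C$ with multiplication $(w_1,z_1)(w_2,z_2)=(w_1+w_2,z_1+z_2+\tfrac12\langle w_1,w_2\rangle)$). Let $\mathcal{Z}$ be the center of $\mathcal{H}$ and $W=\mathcal{H}/\mathcal{Z}$. The commutator map $(h_1,h_2)\mapsto [h_1,h_2]=h_1h_2h_1^{-1}h_2^{-1}$ induces a bimultiplicative nondegenerate $\mathcal{Z}$-valued symplectic form $\langle h_1\mathcal{Z},h_2\mathcal{Z}\rangle=[h_1,h_2]$ on $W$. Let $W^\sharp=W\boxtimes\mathcal{Z}$ be the set $W\times\mathcal{Z}$ with the analogous Heisenberg group law built from this form. A special isomorphism on $\mathcal{H}$ is a homomorphism $\nu:\mathcal{H}\to W^\sharp$ which restricts to the identity on $\mathcal{Z}$ and induces the identity map $W\to W$ modulo the centers, i.e. making the diagram of the exact sequences $1\to\mathcal{Z}\to\mathcal{H}\to W\to 1$ and $1\to\mathcal{Z}\to W^\sharp\to W\to 1$ commute. Let $\mathcal{S}=\mathrm{Sp}(W)$,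 acting on $W^\sharp$ by $s\cdot(w,z)=(s w,z)$; $W\times 1$ denotes the subset $\{(w,1):w\in W\}$ of $W^\sharp$. *)

From HB Require Import structures.
From mathcomp Require Import all_boot all_order all_algebra all_fingroup all_solvable.
Set Implicit Arguments. Unset Strict Implicit. Unset Printing Implicit Defensive.
Import GRing.Theory.
Local Open Scope ring_scope.

(* W0 = 'rV['F_p]_n with the bilinear form <u,v> = u J v^T, where J is an
   invertible skew-symmetric matrix (i.e. a nondegenerate symplectic form;
   skew-symmetric = alternating since p is odd).  C = 'F_p (additive).       *)
Definition heis_form (p n : nat) (J : 'M['F_p]_n) (u v : 'rV['F_p]_n) : 'F_p :=
  ((u *m J *m v^T) 0 0)%R.

Definition heis_mul (p n : nat) (J : 'M['F_p]_n)
    (a b : 'rV['F_p]_n * 'F_p) : 'rV['F_p]_n * 'F_p :=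
  (a.1 + b.1, a.2 + b.2 + (2%:R)^-1 * heis_form J a.1 b.1)%R.

Definition symplectic_matrix (p n : nat) (J : 'M['F_p]_n) : Prop :=
  J^T = (- J)%R /\ J \in unitmx.

Definition heis_iso (gT : finGroupType) (H : {set gT}) (p n : nat)
    (J : 'M['F_p]_n) : Prop :=
  exists f : gT -> 'rV['F_p]_n * 'F_p,
    [/\ {in H &, injective f},
        (forall y, exists2 x, x \in H & f x = y) &
        {in H &, forall x y, f (x * y)%g = heis_mul J (f x) (f y)}].

Definition heisenberg_pgroup (gT : finGroupType) (H : {set gT}) (p : nat) : Prop :=
  exists n (J : 'M['F_p]_n), symplectic_matrix J /\ heis_iso H J.

Section Sharp.
Variables (gT : finGroupType) (H : {group gT}).

Local Notation Z := 'Z(H)%g.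
Local Notation Wt := (coset_of 'Z(H)%g).

(* paper's commutator h1 h2 h1^-1 h2^-1 *)
Definition pcomm (x y : gT) : gT := (x * y * x^-1 * y^-1)%g.

Definition Wform (u v : Wt) : gT := pcomm (repr u) (repr v).

(* square root in the cyclic group Z of odd order: z^(1/2) = z^((|Z|+1)/2) *)
Definition zhalf (z : gT) : gT := (z ^+ (#|Z|.+1)./2)%g.

(* group law of W^sharp = W ⊠ Z (written multiplicatively) *)
Definition sharp_mul (a b : Wt * gT) : Wt * gT :=
  ((a.1 * b.1)%g, (a.2 * b.2 * zhalf (Wform a.1 b.1))%g).

Definition special_iso (nu : gT -> Wt * gT) : Prop :=
  [/\ {in H, forall x, (nu x).2 \in Z},
      {in H &, forall x y, nu (x * y)%g = sharp_mul (nu x) (nu y)},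
      {in Z, forall z, nu z = (1%g, z)} &
      {in H, forall x, (nu x).1 = coset Z x}].

Definition Sp_W (s : {perm Wt}) : Prop :=
  s \in Aut (H / Z)%g /\ {in (H / Z)%g &, forall u v, Wform (s u) (s v) = Wform u v}.

Definition pre_W1 (nu : gT -> Wt * gT) : {set gT} :=
  [set x in H | (nu x).2 == 1%g].

End Sharp.

Arguments special_iso {gT} H nu.
Arguments Sp_W {gT} H s.
Arguments pre_W1 {gT} H nu.
Arguments Wform {gT} H u v.
Arguments sharp_mul {gT} H a b.

From HB Require Import structures.
From mathcomp Require Import all_boot all_order all_algebra all_fingroup all_solvable.

(* A special isomorphism is forced to be [x |-> (x Z, _)] in its first
   component, and its second component is Z-equivariant:
   [nu (x z) = nu x * z] for central [z].  Hence [nu^-1(W x 1)] meets each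
   coset [x Z] in exactly one point, which determines the second component on
   the whole coset; and a symplectic [s] with [nu2 = s o nu1] must be the
   identity on [W]. *)

Section SpecialIso.
Context {gT : finGroupType} {H : {group gT}}.
Implicit Types nu : gT -> coset_of 'Z(H)%g * gT.

Lemma special_iso_eqP {nu1 nu2} :
  special_iso H nu1 -> special_iso H nu2 ->
  {in H, nu1 =1 nu2} <-> {in H, forall x, (nu1 x).2 = (nu2 x).2}.
Proof.
case=> _ _ _ C1 [_ _ _ C2]; split=> [E x xH | E x xH]; first by rewrite E.
by rewrite [nu1 x]surjective_pairing [nu2 x]surjective_pairing C1 // C2 // E.
Qed.

Lemma special_iso_mulZ {nu x z} :
  special_iso H nu -> x \in H -> z \in 'Z(H)%g ->
  (nu (x * z)%g).2 = ((nu x).2 * z)%g.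
Proof.
case=> _ Hm Hz _ xH zZ; have zH : z \in H by move: zZ; rewrite inE => /andP[].
rewrite Hm // (Hz z zZ) /sharp_mul /= /Wform /pcomm repr_coset1.
by rewrite /zhalf mulg1 invg1 mulg1 mulgV expg1n mulg1.
Qed.

Lemma special_iso_pre_W1_inj {nu1 nu2} :
  special_iso H nu1 -> special_iso H nu2 ->
  pre_W1 H nu1 = pre_W1 H nu2 -> {in H, forall x, (nu1 x).2 = (nu2 x).2}.
Proof.
move=> S1 S2 E x xH; have [Zv1 _ _ _] := S1.
set z := ((nu1 x).2)^-1%g.
have zZ : z \in 'Z(H)%g by rewrite groupV Zv1.
have zH : z \in H by move: zZ; rewrite inE => /andP[].
have : (x * z)%g \in pre_W1 H nu1.
  by rewrite inE groupM //= (special_iso_mulZ S1 xH zZ) mulgV.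
rewrite E inE (special_iso_mulZ S2 xH zZ) => /andP[_ /eqP e].
by rewrite -[(nu2 x).2](mulgK z) e mul1g invgK.
Qed.

Lemma Sp_W1 : Sp_W H 1%g.
Proof. by split=> [|u v _ _]; rewrite ?group1 ?perm1. Qed.

End SpecialIso.

Theorem lemma2p31 (gT : finGroupType) (H : {group gT}) (p : nat) :
  prime p -> odd p -> heisenberg_pgroup H p ->
  forall nu1 nu2 : gT -> coset_of 'Z(H)%g * gT,
    special_iso H nu1 -> special_iso H nu2 ->
    [<-> {in H, nu1 =1 nu2};
         pre_W1 H nu1 = pre_W1 H nu2;
         exists s : {perm coset_of 'Z(H)%g},
           Sp_W H s /\ {in H, forall x, nu2 x = (s (nu1 x).1, (nu1 x).2)}].
Proof.
move=> _ _ _ nu1 nu2 S1 S2; tfae.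
- by move=> E; apply/setP=> x; rewrite !inE; case xH: (x \in H) => //=; rewrite E.
- move=> /(special_iso_pre_W1_inj S1 S2) E; exists 1%g; split; first exact: Sp_W1.
  move=> x xH; rewrite perm1 -surjective_pairing.
  by symmetry; apply: (proj2 (special_iso_eqP S1 S2) E).
- by case=> s [_ E]; apply/(special_iso_eqP S1 S2) => x xH; rewrite E.
Qed.
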